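(* Let $D$ be an integral domain and $R=R(D)$. Let $\mathcal M$ be the poset (under inclusion) of multiplicative submonoids of $D$ and $\mathcal U$ the poset of subsets of $R$ that are unions of prime ideals of $R$. For $W\in\mathcal M$ set $\mathfrak p(W):=\bigcap_{f\in W\setminus\{0\}}\mathfrak p_f$, and for $S\in\mathcal U$ set $L(S):=\{0\neq x\in D\mid \frac1x\notin S\}\cup\{0\}$. Then: (a) for any $S\in\mathcal U$ and $W\in\mathcal M$, $W\subseteq L(S)\iff S\subseteq\mathfrak p(W)$; (b) $\mathfrak p(-)$ and $L(-)$ form an antitone Galois connection between $\mathcal M$ and $\mathcal U$; (c) for any $W\in\mathcal M$, $L(\mathfrak p(W))=G(W)$; (d) for any $f\in D\setminus\{0\}$, $L(\mathfrak p_f)=\bigcup_{e\in\mathbb N}G(f^e)$; (e) for any $\mathfrak q\in\operatorname{Spec}R$, $\mathfrak p(L(\mathfrak q))=\mathfrak q$; (f) for any subring $C$ of $D$ that is a regular factroid of $D$, $C=L(\mathfrak p(C))$. Hence $\mathfrak p(-)$ and $L(-)$ restrict to a one-to-one, order-reversing correspondence (Galois correspondence) between the subrings of $D$ that are regular factroids of $D$ and the prime ideals of $R$. Moreover, if $C$ and $\mathfrak q$ correspond in this way, then the composition of natural ring homomorphisms $R(C)\to R\to R/\mathfrak q$ is an isomorphism.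
   Context: For an integral domain $D$ with fraction field $F$, the reciprocal complement $R(D)$ is the subring of $F$ generated by all $1/d$, $d\in D\setminus\{0\}$ (for a subring $C\subseteq D$, $R(C)\subseteq R(D)$). For nonzero $f\in D$, $\mathfrak p_f$ denotes the unique prime ideal of $R(D)$ maximal with respect to not containing $1/f$. A factroid of $D$ is an additive subgroup $H$ of $D$ such that whenever $f,g\in D\setminus\{0\}$ with $fg\in H$, then $f,g\in H$. For $S\subseteq D$, $[S]_D$ is the smallest factroid of $D$ containing $S$. A factroid $H$ is regular if $\{y\in D\mid gy\in[gH]_D\}=H$ for every nonzero $g\in D$. For $S\subseteq D$, $G(S)$ is the intersection of all regular factroids of $D$ containing $S$, and $G(x):=G(\{x\})$. An antitone Galois connection means both maps are order-reversing and (a) holds. *)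

From HB Require Import structures.
From mathcomp Require Import all_boot all_algebra.
From mathcomp Require Import fraction.
Set Implicit Arguments.
Unset Strict Implicit.
Unset Printing Implicit Defensive.
Import GRing.Theory.
Local Open Scope ring_scope.

Definition incl {T : Type} (A B : T -> Prop) : Prop := forall x, A x -> B x.

Section Defs.
Variable D : idomainType.
Local Notation F := {fraction D}.

Definition emb (x : D) : F := FracField.tofrac x.

Inductive ring_gen (S : F -> Prop) : F -> Prop :=
| rg_base x : S x -> ring_gen S x
| rg_one : ring_gen S 1
| rg_opp x : ring_gen S x -> ring_gen S (- x)
| rg_add x y : ring_gen S x -> ring_gen S y -> ring_gen S (x + y)
| rg_mul x y : ring_gen S x -> ring_gen S y -> ring_gen S (x * y).

Definition RC (C : D -> Prop) : F -> Prop :=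
  ring_gen (fun x => exists c, [/\ C c, c != 0 & x = (emb c)^-1]).

Definition RD : F -> Prop := RC (fun _ => True).

Definition prime_ideal (P : F -> Prop) : Prop :=
  [/\ incl P RD, P 0,
      (forall x y, P x -> P y -> P (x + y)),
      (forall r x, RD r -> P x -> P (r * x))
    & (~ P 1 /\ (forall x y, RD x -> RD y -> P (x * y) -> P x \/ P y))].

Definition max_prime_avoiding (f : D) (P : F -> Prop) : Prop :=
  [/\ prime_ideal P, ~ P (emb f)^-1
    & forall Q, prime_ideal Q -> ~ Q (emb f)^-1 -> incl P Q -> incl Q P].

Definition mult_submonoid (W : D -> Prop) : Prop :=
  W 1 /\ (forall x y, W x -> W y -> W (x * y)).

Definition subring (C : D -> Prop) : Prop :=
  [/\ C 1, (forall x y, C x -> C y -> C (x - y)) & (forall x y, C x -> C y -> C (x * y))].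

Definition union_of_primes (S : F -> Prop) : Prop :=
  exists Fam : (F -> Prop) -> Prop,
    (forall P, Fam P -> prime_ideal P) /\
    (forall x, S x <-> exists P, Fam P /\ P x).

Definition pW (pf : D -> F -> Prop) (W : D -> Prop) : F -> Prop :=
  fun x => forall f, W f -> f != 0 -> pf f x.

Definition LS (S : F -> Prop) : D -> Prop :=
  fun x => (x != 0 /\ ~ S (emb x)^-1) \/ x = 0.

Definition factroid (H : D -> Prop) : Prop :=
  [/\ H 0, (forall x y, H x -> H y -> H (x - y))
    & forall f g, f != 0 -> g != 0 -> H (f * g) -> H f /\ H g].

Definition factroid_gen (S : D -> Prop) : D -> Prop :=
  fun x => forall H, factroid H -> incl S H -> H x.

Definition regular_factroid (H : D -> Prop) : Prop :=
  factroid H /\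
  forall g : D, g != 0 ->
    (fun y => factroid_gen (fun z => exists h, H h /\ z = g * h) (g * y)) = H.

Definition Gcl (S : D -> Prop) : D -> Prop :=
  fun x => forall H, regular_factroid H -> incl S H -> H x.

Definition Gx (x : D) : D -> Prop := Gcl (fun y => y = x).

End Defs.

From HB Require Import structures.
From mathcomp Require Import all_boot all_algebra.
From mathcomp Require Import fraction.
From mathcomp Require boolp classical_sets.
From mathcomp Require Import ring.
From Stdlib Require Import Classical.
Import GRing.Theory.
Local Open Scope ring_scope.

(* Every element of [R = R(D)] is a sum of reciprocals [1/d], since [1/a * 1/b = 1/(ab)].
   For a prime [q] of [R], [L(q)] is a subring of [D] (by [1/(xy) = 1/(x-y) * (1/y - 1/x)]),
   and [R] is the direct sum of the span of the [1/d], [d] in [L(q)], and of [q], which is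
   spanned by the remaining reciprocals: a prime is determined by [L(q)], antitonely.
   A Zorn argument together with the maximality of [p_f] gives
   [L(p_f) = {d | d in R f^e for some e}], hence [L(p(W)) = RW \cap D] for a monoid [W];
   clearing denominators shows that [RW \cap D] is the least regular factroid containing [W].
   Everything else is formal, and for [C = L(p(C))] the decomposition
   [R = R(C) (+) p(C)] is the isomorphism [R(C) ~ R/p(C)]. *)

Section ReciprocalComplement.
Set Implicit Arguments.
Unset Strict Implicit.

Variable D : idomainType.
Local Notation F := {fraction D}.
Local Notation rcp d := ((emb d)^-1).

HB.instance Definition _ := GRing.RMorphism.copy (@emb D) (@FracField.tofrac D).

Lemma emb_eq0 (x : D) : (emb x == 0) = (x == 0). Proof. exact: tofrac_eq0. Qed.

Lemma emb_neq0 (x : D) : x != 0 -> emb x != 0. Proof. by rewrite emb_eq0. Qed.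

Lemma emb_inj : injective (@emb D).
Proof. by move=> x y /eqP; rewrite /emb tofrac_eq => /eqP. Qed.

Lemma rcp1 : rcp (1 : D) = 1. Proof. by rewrite rmorph1 invr1. Qed.
Lemma rcpN (x : D) : rcp (- x) = - rcp x. Proof. by rewrite rmorphN invrN. Qed.
Lemma rcpM (x y : D) : rcp (x * y) = rcp x * rcp y. Proof. by rewrite rmorphM invfM. Qed.
Lemma rcpX (x : D) n : rcp (x ^+ n) = rcp x ^+ n. Proof. by rewrite rmorphXn exprVn. Qed.

Lemma rcp_mul_sub (x y : D) : x != 0 -> y != 0 -> x - y != 0 ->
  rcp (x * y) = rcp (x - y) * (rcp y - rcp x).
Proof.
move=> /emb_neq0 x0 /emb_neq0 y0 /emb_neq0 xy0.
have -> : rcp y - rcp x = emb (x - y) * (rcp x * rcp y).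
  by rewrite rmorphB mulrBl mulrA mulfV // mul1r mulrCA mulfV // mulr1.
by rewrite mulrA mulVf // mul1r rcpM.
Qed.

Lemma RD_1 : RD (1 : F). Proof. exact: rg_one. Qed.
Lemma RD_N (x : F) : RD x -> RD (- x). Proof. exact: rg_opp. Qed.
Lemma RD_D (x y : F) : RD x -> RD y -> RD (x + y). Proof. exact: rg_add. Qed.
Lemma RD_M (x y : F) : RD x -> RD y -> RD (x * y). Proof. exact: rg_mul. Qed.
Lemma RD_0 : RD (0 : F). Proof. by rewrite -(subrr 1); apply/RD_D/RD_N/RD_1/RD_1. Qed.
Lemma RD_X (x : F) n : RD x -> RD (x ^+ n).
Proof. by move=> Rx; elim: n => [|n IH]; rewrite ?expr0 ?exprS; [exact: RD_1|exact: RD_M]. Qed.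
Lemma RD_rcp (d : D) : d != 0 -> RD (rcp d). Proof. by move=> d0; apply: rg_base; exists d. Qed.

(** * Reciprocal spans *)

Inductive recip_span (A : D -> Prop) : F -> Prop :=
| recip_span0 : recip_span A 0
| recip_span_rcp d : d != 0 -> A d -> recip_span A (rcp d)
| recip_spanN x : recip_span A x -> recip_span A (- x)
| recip_spanD x y : recip_span A x -> recip_span A y -> recip_span A (x + y).

Lemma recip_spanB A x y : recip_span A x -> recip_span A y -> recip_span A (x - y).
Proof. by move=> Ax Ay; apply/recip_spanD/recip_spanN. Qed.

Lemma recip_span_mono (A B : D -> Prop) : (forall d, d != 0 -> A d -> B d) ->
  incl (recip_span A) (recip_span B).
Proof.
move=> AB x; elim=> [|d d0 Ad|y _ IH|y z _ IHy _ IHz]; first exact: recip_span0.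
- by apply: recip_span_rcp => //; apply: AB.
- exact: recip_spanN.
- exact: recip_spanD.
Qed.

Lemma recip_span_mul (A B C : D -> Prop) x y :
  (forall a b, a != 0 -> b != 0 -> A a -> B b -> C (a * b)) ->
  recip_span A x -> recip_span B y -> recip_span C (x * y).
Proof.
move=> ABC hx; elim: hx y => [|a a0 Aa|z _ IH|z w _ IHz _ IHw] y hy.
- by rewrite mul0r; apply: recip_span0.
- elim: hy => [|b b0 Bb|z _ IH|z w _ IHz _ IHw].
  + by rewrite mulr0; apply: recip_span0.
  + by rewrite -rcpM; apply: recip_span_rcp; [rewrite mulf_neq0|apply: ABC].
  + by rewrite mulrN; apply: recip_spanN.
  + by rewrite mulrDr; apply: recip_spanD.
- by rewrite mulNr; apply/recip_spanN/IH.
- by rewrite mulrDl; apply: recip_spanD; [apply: IHz|apply: IHw].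
Qed.

Lemma RD_recip_span (x : F) : RD x <-> recip_span (fun _ => True) x.
Proof.
split.
- elim=> [y [c [_ c0 ->]]||z _ IH|z w _ IHz _ IHw|z w _ IHz _ IHw].
  + exact: recip_span_rcp.
  + by rewrite -rcp1; apply: recip_span_rcp => //; apply: oner_neq0.
  + exact: recip_spanN.
  + exact: recip_spanD.
  + exact: recip_span_mul IHz IHw.
- elim=> [|d d0 _|z _ IH|z w _ IHz _ IHw]; first exact: RD_0.
  + exact: RD_rcp.
  + exact: RD_N.
  + exact: RD_D.
Qed.

Lemma recip_span_RD (A : D -> Prop) : incl (recip_span A) (@RD D).
Proof.
by move=> x Ax; apply/RD_recip_span; apply: recip_span_mono Ax.
Qed.

Lemma recip_span_split (C : D -> Prop) (x : F) : RD x ->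
  exists s p, [/\ recip_span C s, recip_span (fun d => ~ C d) p & x = s + p].
Proof.
move/RD_recip_span.
elim=> [|d d0 _|z _ [s [p [hs hp ->]]]|z w _ [s [p [hs hp ->]]] _ [s' [p' [hs' hp' ->]]]].
- by exists 0, 0; split; rewrite ?addr0 //; apply: recip_span0.
- have [Cd|nCd] := classic (C d).
  + by exists (rcp d), 0; split; rewrite ?addr0; [apply: recip_span_rcp|apply: recip_span0|].
  + by exists 0, (rcp d); split; rewrite ?add0r; [apply: recip_span0|apply: recip_span_rcp|].
- by exists (- s), (- p); split; [apply: recip_spanN|apply: recip_spanN|rewrite opprD].
- exists (s + s'), (p + p'); split; [exact: recip_spanD|exact: recip_spanD|].
  by rewrite addrACA.
Qed.

Lemma submonoidX (W : D -> Prop) x n : mult_submonoid W -> W x -> W (x ^+ n).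
Proof.
by case=> W1 WM Wx; elim: n => [|n IH]; rewrite ?expr0 ?exprS //; apply: WM.
Qed.

Section Subring.
Variable C : D -> Prop.
Hypothesis hC : subring C.

Lemma subring1 : C 1. Proof. by case: hC. Qed.
Lemma subringB x y : C x -> C y -> C (x - y). Proof. by case: hC => _ hB _; apply: hB. Qed.
Lemma subringM x y : C x -> C y -> C (x * y). Proof. by case: hC => _ _ hM; apply: hM. Qed.
Lemma subring0 : C 0. Proof. by rewrite -(subrr 1); apply/subringB/subring1/subring1. Qed.
Lemma subringN x : C x -> C (- x). Proof. by rewrite -sub0r; apply/subringB/subring0. Qed.
Lemma subringD x y : C x -> C y -> C (x + y).
Proof. by move=> Cx Cy; rewrite -[y]opprK; apply/subringB/subringN. Qed.
Lemma subringX x n : C x -> C (x ^+ n).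
Proof.
by move=> Cx; elim: n => [|n IH]; rewrite ?expr0 ?exprS; [exact: subring1|exact: subringM].
Qed.
Lemma subring_submonoid : mult_submonoid C. Proof. by split; [exact: subring1|exact: subringM]. Qed.

Lemma recip_span_subring_frac s : recip_span C s ->
  exists a b, [/\ C a, C b, b != 0 & s = emb a * rcp b].
Proof.
elim=> [|d d0 Cd|z _ [a [b [Ca Cb b0 ->]]]
      |z w _ [a [b [Ca Cb b0 ->]]] _ [a' [b' [Ca' Cb' b0' ->]]]].
- by exists 0, 1; split; rewrite ?rmorph0 ?mul0r ?oner_neq0 //; [exact: subring0|exact: subring1].
- by exists 1, d; split; rewrite ?rmorph1 ?mul1r //; exact: subring1.
- by exists (- a), b; split; rewrite ?rmorphN ?mulNr //; exact: subringN.
- exists (a * b' + a' * b), (b * b'); split; [|exact: subringM|by rewrite mulf_neq0|].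
    by apply: subringD; apply: subringM.
  have e0 := emb_neq0 b0; have e0' := emb_neq0 b0'.
  rewrite rcpM rmorphD !rmorphM mulrDl; congr (_ + _).
    by rewrite mulrACA mulfV // mulr1.
  by rewrite [rcp b * _]mulrC mulrACA mulfV // mulr1.
Qed.

End Subring.

(** * Ideals of R(D) *)

Definition ideal (J : F -> Prop) : Prop :=
  [/\ incl J (@RD D), J 0, (forall x y, J x -> J y -> J (x + y))
    & forall r x, RD r -> J x -> J (r * x)].

Section Ideal.
Variable J : F -> Prop.
Hypothesis hJ : ideal J.

Lemma ideal_RD x : J x -> RD x. Proof. by case: hJ => h _ _ _; apply: h. Qed.
Lemma ideal0 : J 0. Proof. by case: hJ. Qed.
Lemma idealD x y : J x -> J y -> J (x + y). Proof. by case: hJ => _ _ h _; apply: h. Qed.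
Lemma idealM r x : RD r -> J x -> J (r * x). Proof. by case: hJ => _ _ _ h; apply: h. Qed.
Lemma idealMr r x : J x -> RD r -> J (x * r). Proof. by rewrite mulrC => Jx Rr; apply: idealM. Qed.
Lemma idealN x : J x -> J (- x). Proof. by rewrite -mulN1r; apply/idealM/RD_N/RD_1. Qed.
Lemma idealB x y : J x -> J y -> J (x - y). Proof. by move=> Jx Jy; apply/idealD/idealN. Qed.

Lemma ideal_recip_span (A : D -> Prop) : (forall d, d != 0 -> A d -> J (rcp d)) ->
  incl (recip_span A) J.
Proof.
move=> AJ x; elim=> [|d d0 Ad|y _ IH|y z _ IHy _ IHz]; first exact: ideal0.
- exact: AJ.
- exact: idealN.
- exact: idealD.
Qed.

(* Writing [s = a/b] with [a, b] in [C], [a != 0] would put [1/b = 1/a * s] in [J]. *)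
Lemma recip_span_cap_ideal (C : D -> Prop) s : subring C ->
  (forall b, C b -> b != 0 -> ~ J (rcp b)) -> recip_span C s -> J s -> s = 0.
Proof.
move=> hC CJ /(recip_span_subring_frac hC) [a [b [Ca Cb b0 ->]]] Js.
have [->|a0] := eqVneq a 0; first by rewrite rmorph0 mul0r.
case: (CJ b Cb b0); have := idealM (RD_rcp a0) Js.
by rewrite mulrA mulVf ?mul1r //; exact: emb_neq0.
Qed.

End Ideal.

Lemma LS_rcp (S : F -> Prop) d : LS S d -> d != 0 -> ~ S (rcp d).
Proof. by case=> [[_ h]|->] //; rewrite eqxx. Qed.

Lemma notLS_rcp (S : F -> Prop) d : d != 0 -> ~ LS S d -> S (rcp d).
Proof. by move=> d0 nL; apply: NNPP => nS; apply: nL; left. Qed.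

Lemma LS_antitone (S1 S2 : F -> Prop) : incl S1 S2 -> incl (LS S2) (LS S1).
Proof. by move=> S12 x [[x0 nS2]|->]; [left; split => // /S12|right]. Qed.

Lemma prime_ideal_ideal (P : F -> Prop) : prime_ideal P -> ideal P. Proof. by case. Qed.

Section Prime.
Variable P : F -> Prop.
Hypothesis hP : prime_ideal P.
Let hPi := prime_ideal_ideal hP.

Lemma prime_ideal1 : ~ P 1. Proof. by case: hP => _ _ _ _ []. Qed.
Lemma prime_idealP x y : RD x -> RD y -> P (x * y) -> P x \/ P y.
Proof. by case: hP => _ _ _ _ [_ h]; apply: h. Qed.

Lemma prime_idealX (x : F) n : RD x -> P (x ^+ n) -> P x.
Proof.
move=> Rx; elim: n => [|n IH]; first by rewrite expr0 => /prime_ideal1.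
by rewrite exprS => /prime_idealP [] //; apply: RD_X.
Qed.

Lemma LS_subring : subring (LS P).
Proof.
have LS_mul x y : LS P x -> LS P y -> LS P (x * y).
  move=> Lx Ly; have [->|x0] := eqVneq x 0; first by right; rewrite mul0r.
  have [->|y0] := eqVneq y 0; first by right; rewrite mulr0.
  left; split; first by rewrite mulf_neq0.
  by rewrite rcpM => /prime_idealP [] //; [exact: RD_rcp|exact: RD_rcp|exact: LS_rcp|exact: LS_rcp].
split => // [|x y Lx Ly].
  by left; split; [exact: oner_neq0|rewrite rcp1; exact: prime_ideal1].
have [->|xy0] := eqVneq (x - y) 0; [by right|left; split => // Pxy].
have [x0|x0] := eqVneq x 0.
  move: xy0 Pxy; rewrite x0 sub0r oppr_eq0 rcpN => y0 /(idealN hPi).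
  by rewrite opprK; exact: LS_rcp.
have [y0|y0] := eqVneq y 0; first by move: Pxy; rewrite y0 subr0; exact: LS_rcp.
have /(LS_rcp (LS_mul _ _ Lx Ly)) : x * y != 0 by rewrite mulf_neq0.
apply; rewrite (rcp_mul_sub x0 y0 xy0); apply: (idealMr hPi) => //.
by apply/RD_D/RD_N; apply: RD_rcp.
Qed.

Lemma recip_span_notLS : incl (recip_span (fun d => ~ LS P d)) P.
Proof. by apply: ideal_recip_span => // d d0; apply: notLS_rcp. Qed.

Lemma recip_span_LS_cap s : recip_span (LS P) s -> P s -> s = 0.
Proof. by apply: recip_span_cap_ideal LS_subring _ => // b Lb b0; apply: LS_rcp. Qed.

Lemma prime_ideal_decomp x : RD x ->
  exists s p, [/\ recip_span (LS P) s, P p & x = s + p].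
Proof.
case/(recip_span_split (LS P)) => s [p [hs hp ->]].
by exists s, p; split => //; apply: recip_span_notLS.
Qed.

Lemma prime_ideal_recip_span x : P x -> recip_span (fun d => ~ LS P d) x.
Proof.
move=> Px; have [s [p [hs hp xE]]] := recip_span_split (LS P) (ideal_RD hPi Px).
have Pp := recip_span_notLS hp.
suff s0 : s = 0 by rewrite xE s0 add0r.
apply: recip_span_LS_cap => //.
by rewrite -(addrK p s) -xE; apply: (idealB hPi).
Qed.

End Prime.

Lemma prime_ideal_antitone (P Q : F -> Prop) : prime_ideal P -> prime_ideal Q ->
  incl (LS Q) (LS P) -> incl P Q.
Proof.
move=> hP hQ QP x /(prime_ideal_recip_span hP) Px; apply: (recip_span_notLS hQ).
by apply: recip_span_mono Px => d _ nLP LQ; apply/nLP/QP.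
Qed.

Lemma prime_union_of_primes (P : F -> Prop) : prime_ideal P -> union_of_primes P.
Proof.
move=> hP; exists (fun Q => Q = P); split => [Q -> //|x].
by split => [Px|[Q [-> Qx]] //]; exists P.
Qed.

Lemma union_of_primes_LS_submonoid (S : F -> Prop) : union_of_primes S -> mult_submonoid (LS S).
Proof.
move=> [Fam [Fprime FS]]; split.
  left; split; first exact: oner_neq0.
  by rewrite rcp1 => /(FS 1).1 [P [FP P1]]; apply: prime_ideal1 (Fprime P FP) P1.
move=> x y Lx Ly; have [->|x0] := eqVneq x 0; first by right; rewrite mul0r.
have [->|y0] := eqVneq y 0; first by right; rewrite mulr0.
left; split; first by rewrite mulf_neq0.
rewrite rcpM => /(FS _).1 [P [FP Pxy]].
have inS z : P z -> S z by move=> Pz; apply/(FS z).2; exists P.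
case: (prime_idealP (Fprime P FP) (RD_rcp x0) (RD_rcp y0) Pxy) => /inS.
- exact: LS_rcp Lx x0.
- exact: LS_rcp Ly y0.
Qed.

Definition mul_powers (f : D) (y : F) : Prop :=
  exists e r, RD r /\ y = r * emb (f ^+ e).

Lemma mul_powers_LS (Q : F -> Prop) (f d : D) : prime_ideal Q -> f != 0 -> ~ Q (rcp f) ->
  mul_powers f (emb d) -> LS Q d.
Proof.
move=> hQ f0 nQf [e [r [Rr de]]].
have [->|d0] := eqVneq d 0; [by right|left; split => // Qd].
have r0 : r != 0 by apply: contra_neq (emb_neq0 d0) => r0; rewrite de r0 mul0r.
apply/nQf/(prime_idealX hQ (n := e) (RD_rcp f0)).
have -> : rcp f ^+ e = r * rcp d by rewrite -rcpX de invfM mulrA mulfV ?mul1r.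
exact: (idealM (prime_ideal_ideal hQ)).
Qed.

(** * Prime ideals avoiding the powers of an element *)

Definition avoids_powers (J : F -> Prop) (x : F) : Prop := forall e, ~ J (x ^+ e).

Definition ideal_adjoin (J : F -> Prop) (z : F) : F -> Prop :=
  fun w => exists a r, [/\ J a, RD r & w = a + r * z].

Section IdealAdjoin.
Variables (J : F -> Prop) (z : F).
Hypotheses (hJ : ideal J) (Rz : RD z).

Lemma ideal_adjoin_ideal : ideal (ideal_adjoin J z).
Proof.
split.
- by move=> w [a [r [Ja Rr ->]]]; apply: RD_D; [exact: ideal_RD Ja|exact: RD_M].
- by exists 0, 0; split; [exact: ideal0|exact: RD_0|rewrite mul0r addr0].
- move=> x y [a [r [Ja Rr ->]]] [a' [r' [Ja' Rr' ->]]].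
  exists (a + a'), (r + r'); split; [exact: idealD|exact: RD_D|].
  by rewrite mulrDl addrACA.
- move=> t x Rt [a [r [Ja Rr ->]]].
  exists (t * a), (t * r); split; [exact: idealM|exact: RD_M|].
  by rewrite mulrDr mulrA.
Qed.

Lemma ideal_adjoin_sub : incl J (ideal_adjoin J z).
Proof. by move=> a Ja; exists a, 0; split; [|exact: RD_0|rewrite mul0r addr0]. Qed.

Lemma ideal_adjoin_gen : ideal_adjoin J z z.
Proof. by exists 0, 1; split; [exact: ideal0|exact: RD_1|rewrite add0r mul1r]. Qed.

End IdealAdjoin.

Lemma maximal_avoiding_prime (A : F -> Prop) x : ideal A -> avoids_powers A x ->
  (forall B, ideal B -> avoids_powers B x -> incl A B -> incl B A) -> prime_ideal A.
Proof.
move=> hA xA Amax.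
have adjoin_hits z : RD z -> ~ A z -> exists e a r, [/\ A a, RD r & x ^+ e = a + r * z].
  move=> Rz nAz; apply: NNPP => nhit; apply/nAz/(Amax (ideal_adjoin A z)).
  - exact: ideal_adjoin_ideal.
  - by move=> e [a [r [Aa Rr E]]]; apply: nhit; exists e, a, r.
  - exact: ideal_adjoin_sub.
  - exact: ideal_adjoin_gen.
case: (hA) => AR A0 AD AM.
split => //; split; first by move=> A1; apply: (xA 0%N); rewrite expr0.
move=> y z Ry Rz Ayz; apply: NNPP => nyz.
have [e1 [a1 [r1 [Aa1 Rr1 E1]]]] := adjoin_hits y Ry (fun h => nyz (or_introl h)).
have [e2 [a2 [r2 [Aa2 Rr2 E2]]]] := adjoin_hits z Rz (fun h => nyz (or_intror h)).
apply: (xA (e1 + e2)%N); rewrite exprD E1 E2.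
have -> : (a1 + r1 * y) * (a2 + r2 * z) =
          (a2 + r2 * z) * a1 + (r1 * y * a2 + r1 * r2 * (y * z)) by ring.
apply: (AD); first by apply: (AM) => //; apply: RD_D; [exact: AR|exact: RD_M].
by apply: (AD); apply: (AM) => //; apply: RD_M.
Qed.

Lemma ideal_chain_bigcup (Fc : (F -> Prop) -> Prop) :
  (forall J y, Fc J -> J y -> ideal J) -> classical_sets.total_on Fc classical_sets.subset ->
  (exists2 J, Fc J & ideal J) -> ideal (classical_sets.bigcup Fc id).
Proof.
move=> Fideal tot [J0 FJ0 hJ0]; split.
- by move=> x [J FJ /= Jx]; apply: (ideal_RD (Fideal J x FJ Jx)).
- by exists J0 => //; apply: (ideal0 hJ0).
- move=> x y [J FJ /= Jx] [K FK /= Ky].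
  have [JK|KJ] := tot J K FJ FK.
  + by exists K => //; apply: (idealD (Fideal K y FK Ky)) => //; apply: JK.
  + by exists J => //; apply: (idealD (Fideal J x FJ Jx)) => //; apply: KJ.
- by move=> r x Rr [J FJ /= Jx]; exists J => //; apply: (idealM (Fideal J x FJ Jx)).
Qed.

Lemma exists_prime_avoiding (I : F -> Prop) x : ideal I -> avoids_powers I x ->
  exists Q, [/\ prime_ideal Q, avoids_powers Q x & incl I Q].
Proof.
move=> hI xI.
pose good J := [/\ ideal J, avoids_powers J x & incl I J].
(* The empty set is admitted so that the union of the empty chain qualifies. *)
have [A [[A0|[hA xA IA]] Amax]] : exists A, (A = (fun _ => False) \/ good A) /\
    forall B, classical_sets.proper A B -> ~ (B = (fun _ => False) \/ good B).
- apply: classical_sets.Zorn_bigcup => Fc Fgood tot.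
  have goodF J y : Fc J -> J y -> good J.
    by move=> FJ Jy; case: (Fgood J FJ) => // J0; rewrite J0 in Jy.
  have [[J FJ gJ]|nogood] := classic (exists2 J, Fc J & good J).
  + right; split.
    * apply: ideal_chain_bigcup => // [K y FK Ky|]; first by case: (goodF K y FK Ky).
      by exists J => //; case: gJ.
    * by move=> e [K FK /= Kx]; case: (goodF K _ FK Kx) => _ xK _; apply: (xK e).
    * by move=> w Iw; exists J => //; case: gJ => _ _; apply.
  + left; apply/boolp.predeqP => w; split => // -[K FK /= Kw].
    by apply: nogood; exists K => //; apply: goodF Kw.
- exfalso; apply: (Amax I); last by right; split => // w.
  split; first by rewrite A0.
  by move=> /(_ 0); rewrite A0; apply; apply: (ideal0 hI).
exists A; split => //; apply: maximal_avoiding_prime => // B hB xB AB.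
apply: NNPP => nBA; apply: (Amax B); first by split.
by right; split => // w /IA /AB.
Qed.

(** * Regular factroids *)

Inductive Rspan (W : D -> Prop) : F -> Prop :=
| Rspan0 : Rspan W 0
| Rspan_frac w d : W w -> d != 0 -> Rspan W (emb w * rcp d)
| RspanN y : Rspan W y -> Rspan W (- y)
| RspanD y z : Rspan W y -> Rspan W z -> Rspan W (y + z).

Definition Rspan_D (W : D -> Prop) : D -> Prop := fun x => Rspan W (emb x).

Section Rspan.
Variable W : D -> Prop.

Lemma Rspan_mul_rcp (g : D) y : g != 0 -> Rspan W y -> Rspan W (y * rcp g).
Proof.
move=> g0; elim=> [|w d Ww d0|z _ IH|z t _ IHz _ IHt].
- by rewrite mul0r; apply: Rspan0.
- by rewrite -mulrA -rcpM; apply: Rspan_frac => //; rewrite mulf_neq0.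
- by rewrite mulNr; apply: RspanN.
- by rewrite mulrDl; apply: RspanD.
Qed.

Lemma Rspan_RD_mul r w : RD r -> W w -> Rspan W (r * emb w).
Proof.
move=> /RD_recip_span Rr Ww; elim: Rr => [|d d0 _|z _ IH|z t _ IHz _ IHt].
- by rewrite mul0r; apply: Rspan0.
- by rewrite mulrC; apply: Rspan_frac.
- by rewrite mulNr; apply: RspanN.
- by rewrite mulrDl; apply: RspanD.
Qed.

Lemma Rspan_submonoid y : mult_submonoid W -> Rspan W y ->
  exists w r, [/\ W w, RD r & y = r * emb w].
Proof.
case=> W1 WM; elim=> [|w d Ww d0|z _ [w [r [Ww Rr ->]]]
                    |z t _ [w [r [Ww Rr ->]]] _ [w' [r' [Ww' Rr' ->]]]].
- by exists 1, 0; split; [|exact: RD_0|rewrite mul0r].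
- by exists w, (rcp d); split; [|exact: RD_rcp|rewrite mulrC].
- by exists w, (- r); split; [|exact: RD_N|rewrite mulNr].
- have [w0|w0] := eqVneq w 0.
    by exists w', r'; split => //; rewrite w0 rmorph0 mulr0 add0r.
  have [w'0|w'0] := eqVneq w' 0.
    by exists w, r; split => //; rewrite w'0 rmorph0 mulr0 addr0.
  exists (w * w'), (r * rcp w' + r' * rcp w); split; first exact: WM.
    by apply: RD_D; apply: RD_M => //; apply: RD_rcp.
  have e0 := emb_neq0 w0; have e0' := emb_neq0 w'0.
  rewrite rmorphM mulrDl; congr (_ + _); first by rewrite [emb w * _]mulrC mulrA mulfVK.
  by rewrite mulrA mulfVK.
Qed.

Lemma Rspan_scaled_factroid (y0 : F) : factroid (fun z => Rspan W (emb z * y0)).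
Proof.
split.
- by rewrite rmorph0 mul0r; apply: Rspan0.
- by move=> a b Wa Wb; rewrite rmorphB mulrBl; apply/RspanD/RspanN.
- move=> a b a0 b0; rewrite rmorphM => Wab; split.
  + by have := Rspan_mul_rcp b0 Wab; rewrite mulrAC mulfK ?emb_neq0.
  + by have := Rspan_mul_rcp a0 Wab; rewrite [emb a * _]mulrC mulrAC mulfK ?emb_neq0.
Qed.

End Rspan.

Lemma Rspan1P (w0 : D) y : Rspan (fun w => w = w0) y <-> exists r, RD r /\ y = r * emb w0.
Proof.
split; last by case=> r [Rr ->]; apply: Rspan_RD_mul.
elim=> [|w d -> d0|z _ [r [Rr ->]]|z t _ [r [Rr ->]] _ [r' [Rr' ->]]].
- by exists 0; split; [exact: RD_0|rewrite mul0r].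
- by exists (rcp d); split; [exact: RD_rcp|rewrite mulrC].
- by exists (- r); split; [exact: RD_N|rewrite mulNr].
- by exists (r + r'); split; [exact: RD_D|rewrite mulrDl].
Qed.

Definition scaled (g : D) (H : D -> Prop) : D -> Prop := fun z => exists h, H h /\ z = g * h.

Section Factroid.
Variable H : D -> Prop.
Hypothesis hH : factroid H.

Lemma factroid0 : H 0. Proof. by case: hH. Qed.
Lemma factroidB x y : H x -> H y -> H (x - y). Proof. by case: hH => _ hB _; apply: hB. Qed.
Lemma factroid_mulP (f g : D) : f != 0 -> g != 0 -> H (f * g) -> H f /\ H g.
Proof. by case: hH => _ _ hM; apply: hM. Qed.
Lemma factroidN x : H x -> H (- x). Proof. by rewrite -sub0r; apply/factroidB/factroid0. Qed.
Lemma factroidD x y : H x -> H y -> H (x + y).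
Proof. by move=> Hx Hy; rewrite -[y]opprK; apply/factroidB/factroidN. Qed.

Lemma factroid_preimage_mul (g : D) : g != 0 -> factroid (fun t => H (t * g)).
Proof.
move=> g0; split; first by rewrite mul0r; apply: factroid0.
  by move=> a b Ha Hb; rewrite mulrBl; apply: factroidB.
move=> a b a0 b0 Hab; split.
- have Hagb : H (a * g * b) by rewrite mulrAC.
  by case: (factroid_mulP (mulf_neq0 a0 g0) b0 Hagb).
- have Hbga : H (b * g * a) by rewrite mulrC mulrA.
  by case: (factroid_mulP (mulf_neq0 b0 g0) a0 Hbga).
Qed.

End Factroid.

Lemma factroid_gen_factroid (S : D -> Prop) : factroid (factroid_gen S).
Proof.
split.
- by move=> H hH _; apply: factroid0.
- by move=> x y Sx Sy H hH SH; apply: factroidB hH _ _ (Sx H hH SH) (Sy H hH SH).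
- move=> f g f0 g0 Sfg; split=> H hH SH.
  + by case: (factroid_mulP hH f0 g0 (Sfg H hH SH)).
  + by case: (factroid_mulP hH f0 g0 (Sfg H hH SH)).
Qed.

Lemma factroid_gen_scaled_mul (H : D -> Prop) (g1 g2 z : D) : g2 != 0 ->
  factroid_gen (scaled g1 H) z -> factroid_gen (scaled (g1 * g2) H) (z * g2).
Proof.
move=> g20 Hz K hK sK; apply: (Hz (fun t => K (t * g2))); first exact: factroid_preimage_mul.
by move=> t [h [Hh ->]]; apply: sK; exists h; rewrite mulrAC.
Qed.

Lemma Rspan_D_regular W : regular_factroid (Rspan_D W).
Proof.
split.
  have -> : Rspan_D W = (fun z => Rspan W (emb z * 1)) by apply/boolp.funext => z; rewrite mulr1.
  exact: Rspan_scaled_factroid.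
move=> g g0; apply/boolp.predeqP => y; split => [gy|Wy]; last first.
  by move=> K _ sK; apply: sK; exists y.
have := gy _ (Rspan_scaled_factroid W (rcp g)).
rewrite /Rspan_D rmorphM [emb g * _]mulrC mulfK ?emb_neq0 //; apply.
by move=> z [h [Wh ->]]; rewrite rmorphM [emb g * _]mulrC mulfK ?emb_neq0.
Qed.

Lemma Rspan_clear_denominators (W H : D -> Prop) y : incl W H -> Rspan W y ->
  exists g z, [/\ g != 0, y * emb g = emb z & factroid_gen (scaled g H) z].
Proof.
have genF S := factroid_gen_factroid S.
move=> WH; elim=> [|w d Ww d0|y' _ [g [z [g0 E Hz]]]
                 |y1 y2 _ [g [z [g0 E Hz]]] _ [g' [z' [g0' E' Hz']]]].
- exists 1, 0; split; [exact: oner_neq0|by rewrite mul0r rmorph0|exact: factroid0 (genF _)].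
- exists d, w; split => //; first by rewrite mulfVK ?emb_neq0.
  have [->|w0] := eqVneq w 0; first exact: factroid0 (genF _).
  have dw : factroid_gen (scaled d H) (d * w).
    by move=> K _ sK; apply: sK; exists w; split => //; apply: WH.
  by case: (factroid_mulP (genF _) d0 w0 dw).
- exists g, (- z); split => //; first by rewrite mulNr E rmorphN.
  by have := factroidN (genF _) Hz.
- exists (g * g'), (z * g' + z' * g); split; first by rewrite mulf_neq0.
  + rewrite rmorphD !rmorphM mulrDl mulrA E; congr (_ + _).
    by rewrite [emb g * _]mulrC mulrA E'.
  + apply: factroidD (genF _) _ _ _ _; first exact: factroid_gen_scaled_mul.
    by rewrite mulrC; apply: factroid_gen_scaled_mul.
Qed.

Lemma Gcl_Rspan_D W : Gcl W = Rspan_D W.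
Proof.
apply/boolp.predeqP => x; split => [|Wx H [hH Hreg] WH].
  apply; first exact: Rspan_D_regular.
  move=> w Ww; rewrite /Rspan_D -[emb w]mulr1 -rcp1.
  by apply: Rspan_frac => //; apply: oner_neq0.
have [g [z [g0 E Hz]]] := Rspan_clear_denominators WH Wx.
rewrite -(Hreg g g0) /=; suff -> : g * x = z by [].
by apply: emb_inj; rewrite -E rmorphM mulrC.
Qed.

Lemma Gcl_regular (C : D -> Prop) : regular_factroid C -> Gcl C = C.
Proof. by move=> hC; apply/boolp.predeqP => x; split => [|Cx H _ CH]; [apply|apply: CH]. Qed.

Lemma RC_recip_span (C : D -> Prop) s : subring C -> RC C s <-> recip_span C s.
Proof.
move=> hC; split.
- elim=> [y [c [Cc c0 ->]]||z _ IH|z w _ IHz _ IHw|z w _ IHz _ IHw].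
  + exact: recip_span_rcp.
  + by rewrite -rcp1; apply: recip_span_rcp; [exact: oner_neq0|exact: subring1].
  + exact: recip_spanN.
  + exact: recip_spanD.
  + by apply: recip_span_mul IHz IHw => a b _ _; apply: subringM.
- elim=> [|d d0 Cd|z _ IH|z w _ IHz _ IHw].
  + by rewrite -(subrr 1); apply/rg_add/rg_opp/rg_one/rg_one.
  + by apply: rg_base; exists d.
  + exact: rg_opp.
  + exact: rg_add.
Qed.

(** * The Galois correspondence *)

Section MaximalPrimes.
Variable pf : D -> F -> Prop.
Hypothesis Hpf : forall f : D, f != 0 -> max_prime_avoiding f (pf f).

Lemma pf_prime (f : D) : f != 0 -> prime_ideal (pf f). Proof. by case/Hpf. Qed.
Lemma pf_ideal (f : D) : f != 0 -> ideal (pf f). Proof. by move/pf_prime/prime_ideal_ideal. Qed.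
Lemma pf_avoid (f : D) : f != 0 -> ~ pf f (rcp f). Proof. by case/Hpf. Qed.

(* If [c] lies in no [R f^e], then [p_f + R (1/c)] still avoids the powers of [1/f]; a prime
   above it avoiding [1/f] is [p_f] by maximality, and would contain [1/c]. *)
Lemma LS_pf_mul_powers (f c : D) : f != 0 -> LS (pf f) c -> mul_powers f (emb c).
Proof.
move=> f0 Lc; have [hP _ Pmax] := Hpf f0; have hPi := prime_ideal_ideal hP.
have [->|c0] := eqVneq c 0.
  by exists 0%N, 0; split; [exact: RD_0|rewrite rmorph0 mul0r].
apply: NNPP => nc; have Lf : LS (pf f) f by left; split => //; apply: pf_avoid.
have I_avoids : avoids_powers (ideal_adjoin (pf f) (rcp c)) (rcp f).
  move=> e [p [r [Pp Rr E]]]; apply: nc.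
  have [s [p' [hs Pp' rE]]] := prime_ideal_decomp hP Rr.
  have s_eq : s * rcp c = rcp (f ^+ e).
    apply/eqP; rewrite -subr_eq0; apply/eqP/(recip_span_LS_cap hP).
      apply: recip_spanB.
        apply: recip_span_mul hs (recip_span_rcp c0 Lc) => a b _ _.
        exact: (subringM (LS_subring hP)).
      by apply: recip_span_rcp; [rewrite expf_neq0|apply: (subringX (LS_subring hP))].
    have -> : s * rcp c - rcp (f ^+ e) = - (p + p' * rcp c) by rewrite rcpX E rE; ring.
    by apply/(idealN hPi)/(idealD hPi) => //; apply: (idealMr hPi) => //; apply: RD_rcp.
  exists e, s; split; first exact: recip_span_RD hs.
  by rewrite -(mulfVK (emb_neq0 c0) s) s_eq mulrAC mulVf ?mul1r // emb_neq0 // expf_neq0.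
have [Q [hQ Qf IQ]] := exists_prime_avoiding (ideal_adjoin_ideal hPi (RD_rcp c0)) I_avoids.
have nQf : ~ Q (rcp f) by move=> Qf1; apply: (Qf 1%N); rewrite expr1.
apply: (LS_rcp Lc c0); apply: (Pmax Q hQ nQf) => [p Pp|].
  exact/IQ/ideal_adjoin_sub.
exact/IQ/ideal_adjoin_gen.
Qed.

Lemma LS_pfP (f d : D) : f != 0 -> LS (pf f) d <-> mul_powers f (emb d).
Proof.
move=> f0; split; first exact: LS_pf_mul_powers.
by apply: mul_powers_LS; [exact: pf_prime|exact: f0|exact: pf_avoid].
Qed.

Lemma prime_sub_pf (Q : F -> Prop) (f : D) :
  prime_ideal Q -> f != 0 -> ~ Q (rcp f) -> incl Q (pf f).
Proof.
move=> hQ f0 nQf; apply: (prime_ideal_antitone hQ (pf_prime f0)) => d.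
by move/(LS_pfP d f0); apply: mul_powers_LS.
Qed.

Lemma pf_mul_sub (f g : D) : f != 0 -> g != 0 -> incl (pf (f * g)) (pf f).
Proof.
move=> f0 g0; have fg0 : f * g != 0 by rewrite mulf_neq0.
apply: prime_sub_pf f0 _; first exact: pf_prime.
move=> Pf; apply: (pf_avoid fg0); rewrite rcpM.
by apply: (idealMr (pf_ideal fg0)) => //; apply: RD_rcp.
Qed.

Lemma not_pW (W : D -> Prop) x : ~ pW pf W x -> exists f, [/\ W f, f != 0 & ~ pf f x].
Proof.
by move=> nPx; apply: NNPP => h; apply: nPx => f Wf f0; apply: NNPP => nfx; apply: h; exists f.
Qed.

(* The [p_f], [f] in [W], form a directed family since [p_(fg)] lies in [p_f] and [p_g]. *)
Lemma pW_prime (W : D -> Prop) : mult_submonoid W -> prime_ideal (pW pf W).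
Proof.
case=> W1 WM; have one0 : (1 : D) != 0 := oner_neq0 _.
split.
- by move=> x /(_ 1 W1 one0); apply: (ideal_RD (pf_ideal one0)).
- by move=> f _ f0; apply: (ideal0 (pf_ideal f0)).
- by move=> x y Wx Wy f Wf f0; apply: (idealD (pf_ideal f0)); [apply: Wx|apply: Wy].
- by move=> r x Rr Wx f Wf f0; apply: (idealM (pf_ideal f0)) => //; apply: Wx.
split; first by move=> /(_ 1 W1 one0); rewrite -rcp1; apply: pf_avoid.
move=> x y Rx Ry Wxy; apply: NNPP => nxy.
have [f [Wf f0 nfx]] := not_pW (fun Px => nxy (or_introl Px)).
have [g [Wg g0 ngy]] := not_pW (fun Py => nxy (or_intror Py)).
have fg0 : f * g != 0 by rewrite mulf_neq0.
case: (prime_idealP (pf_prime fg0) Rx Ry (Wxy _ (WM _ _ Wf Wg) fg0)) => [Px|Py].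
- exact/nfx/(pf_mul_sub f0 g0).
- by apply/ngy/(pf_mul_sub g0 f0); rewrite mulrC.
Qed.

Lemma pW_antitone (W1 W2 : D -> Prop) : incl W1 W2 -> incl (pW pf W2) (pW pf W1).
Proof. by move=> W12 x Px f /W12; apply: Px. Qed.

Lemma sub_LS_pW (W : D -> Prop) : incl W (LS (pW pf W)).
Proof.
move=> w Ww; have [->|w0] := eqVneq w 0; [by right|left; split => // Pw].
exact: pf_avoid w0 (Pw w Ww w0).
Qed.

Lemma sub_LS_iff_sub_pW (S : F -> Prop) (W : D -> Prop) :
  union_of_primes S -> incl W (LS S) <-> incl S (pW pf W).
Proof.
move=> [Fam [Fprime FS]]; split => [WL x Sx f Wf f0|SW w /sub_LS_pW]; last first.
  exact: LS_antitone.
have [P [FP Px]] := (FS x).1 Sx.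
suff nPf : ~ P (rcp f) by apply: (prime_sub_pf (Fprime P FP) f0 nPf).
by move=> Pf; apply: (LS_rcp (WL f Wf) f0); apply/(FS _).2; exists P.
Qed.

Lemma LS_pW_Rspan_D (W : D -> Prop) : mult_submonoid W -> LS (pW pf W) = Rspan_D W.
Proof.
move=> hW; apply/boolp.predeqP => x; split.
- case=> [[x0 nPx]|->]; last by rewrite /Rspan_D rmorph0; apply: Rspan0.
  have [f [Wf f0 nfx]] := not_pW nPx.
  have /(LS_pfP x f0) [e [r [Rr xE]]] : LS (pf f) x by left.
  by rewrite /Rspan_D xE; apply: Rspan_RD_mul => //; apply: submonoidX.
- move=> /(Rspan_submonoid hW) [w [r [Ww Rr xE]]].
  have [->|x0] := eqVneq x 0; [by right|left; split => // Px].
  have w0 : w != 0 by apply: contra_neq (emb_neq0 x0) => w0; rewrite xE w0 rmorph0 mulr0.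
  have : LS (pf w) x by apply/(LS_pfP x w0); exists 1%N, r; rewrite expr1.
  by move/LS_rcp => /(_ x0); apply; apply: Px.
Qed.

Lemma LS_pW_Gcl (W : D -> Prop) : mult_submonoid W -> LS (pW pf W) = Gcl W.
Proof. by move=> hW; rewrite Gcl_Rspan_D LS_pW_Rspan_D. Qed.

Lemma LS_pf_Gx (f : D) : f != 0 -> LS (pf f) = (fun x => exists e : nat, Gx (f ^+ e) x).
Proof.
move=> f0; apply/boolp.predeqP => x; rewrite LS_pfP //; split.
- by case=> e [r [Rr xE]]; exists e; rewrite /Gx Gcl_Rspan_D; apply/Rspan1P; exists r.
- by case=> e; rewrite /Gx Gcl_Rspan_D => /Rspan1P [r [Rr xE]]; exists e, r.
Qed.

Lemma pW_LS (q : F -> Prop) : prime_ideal q -> pW pf (LS q) = q.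
Proof.
move=> hq; apply/boolp.predeqP => x; split.
- apply: (prime_ideal_antitone (pW_prime (subring_submonoid (LS_subring hq))) hq).
  exact: sub_LS_pW.
- by apply: (sub_LS_iff_sub_pW _ (prime_union_of_primes hq)).1.
Qed.

Lemma LS_pW_regular_subring (C : D -> Prop) : subring C -> regular_factroid C ->
  LS (pW pf C) = C.
Proof. by move=> hC hreg; rewrite LS_pW_Gcl ?Gcl_regular //; apply: subring_submonoid. Qed.

Lemma LS_prime_regular (q : F -> Prop) : prime_ideal q -> regular_factroid (LS q).
Proof.
move=> hq; rewrite -{1}(pW_LS hq) LS_pW_Rspan_D; first exact: Rspan_D_regular.
exact/subring_submonoid/LS_subring.
Qed.

Lemma RC_cap_pW (C : D -> Prop) : subring C -> regular_factroid C ->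
  forall s, RC C s -> pW pf C s -> s = 0.
Proof.
move=> hC hreg s /(RC_recip_span _ hC) Cs.
apply: (recip_span_LS_cap (pW_prime (subring_submonoid hC))).
by rewrite LS_pW_regular_subring.
Qed.

Lemma RD_RC_decomp (C : D -> Prop) : subring C -> regular_factroid C ->
  forall r, RD r -> exists s, RC C s /\ pW pf C (r - s).
Proof.
move=> hC hreg r Rr; have hP := pW_prime (subring_submonoid hC).
have [s [p [hs Pp ->]]] := prime_ideal_decomp hP Rr.
exists s; split; last by rewrite addrC addKr.
by apply/(RC_recip_span _ hC); rewrite -(LS_pW_regular_subring hC hreg).
Qed.

End MaximalPrimes.

End ReciprocalComplement.

Theorem mainTheorem16 (D : idomainType)
  (pf : D -> {fraction D} -> Prop)
  (Hpf : forall f : D, f != 0 -> max_prime_avoiding f (pf f)) :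
  (* (a) *)
  (forall (S : {fraction D} -> Prop) (W : D -> Prop),
     union_of_primes S -> mult_submonoid W ->
     (incl W (LS S) <-> incl S (pW pf W))) /\
  (* (b) antitone Galois connection between M and U *)
  ((forall W : D -> Prop, mult_submonoid W -> union_of_primes (pW pf W)) /\
   (forall S : {fraction D} -> Prop, union_of_primes S -> mult_submonoid (LS S)) /\
   (forall W1 W2 : D -> Prop, mult_submonoid W1 -> mult_submonoid W2 ->
      incl W1 W2 -> incl (pW pf W2) (pW pf W1)) /\
   (forall S1 S2 : {fraction D} -> Prop, union_of_primes S1 -> union_of_primes S2 ->
      incl S1 S2 -> incl (LS S2) (LS S1)) /\
   (forall (S : {fraction D} -> Prop) (W : D -> Prop), union_of_primes S -> mult_submonoid W ->
     (incl W (LS S) <-> incl S (pW pf W)))) /\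
  (* (c) *)
  (forall W : D -> Prop, mult_submonoid W -> LS (pW pf W) = Gcl W) /\
  (* (d) *)
  (forall f : D, f != 0 ->
     LS (pf f) = (fun x => exists e : nat, Gx (f ^+ e) x)) /\
  (* (e) *)
  (forall q : {fraction D} -> Prop, prime_ideal q -> pW pf (LS q) = q) /\
  (* (f) *)
  (forall C : D -> Prop, subring C -> regular_factroid C -> C = LS (pW pf C)) /\
  (* the restricted correspondence is well defined *)
  (forall C : D -> Prop, subring C -> regular_factroid C -> prime_ideal (pW pf C)) /\
  (forall q : {fraction D} -> Prop, prime_ideal q -> subring (LS q) /\ regular_factroid (LS q)) /\
  (* R(C) -> R -> R/q is an isomorphism when q = p(C) *)
  (forall C : D -> Prop, subring C -> regular_factroid C ->
     (forall s, RC C s -> pW pf C s -> s = 0) /\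
     (forall r, @RD D r -> exists s, RC C s /\ pW pf C (r - s))).
Proof.
have galois S W (uS : union_of_primes S) (_ : mult_submonoid W) :=
  sub_LS_iff_sub_pW Hpf W uS.
split; first exact: galois.
split.
  split; first by move=> W hW; apply/prime_union_of_primes/(pW_prime Hpf).
  split; first exact: union_of_primes_LS_submonoid.
  split; first by move=> W1 W2 _ _; apply: pW_antitone.
  split; first by move=> S1 S2 _ _; apply: LS_antitone.
  exact: galois.
split; first exact: LS_pW_Gcl Hpf.
split; first exact: LS_pf_Gx Hpf.
split; first exact: pW_LS Hpf.
split; first by move=> C hC hreg; rewrite LS_pW_regular_subring.
split; first by move=> C hC _; apply/(pW_prime Hpf)/subring_submonoid.
split; first by move=> q hq; split; [exact: LS_subring|exact: (LS_prime_regular Hpf hq)].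
by move=> C hC hreg; split; [exact: (RC_cap_pW Hpf hC hreg)|exact: (RD_RC_decomp Hpf hC hreg)].
Qed.
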